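(* Let $X$ be a quantity space over a field $K$. (1) $X/{\sim}$ is a free abelian group of finite rank. (2) Any two bases for $X/{\sim}$ have the same number of elements, any basis for $X$ has the same number of elements as any basis for $X/{\sim}$, and any two bases for $X$ have the same number of elements.
   Context: A scalable monoid over a field $K$ is a monoid $X$ (written multiplicatively, unit $\mathbf{1}=1_X$) with a map $K\times X\to X$, $(\alpha,x)\mapsto\alpha x$, such that $1x=x$, $\alpha(\beta x)=(\alpha\beta)x$, and $\alpha(xy)=(\alpha x)y=x(\alpha y)$ for all $\alpha,\beta\in K$, $x,y\in X$. It is commutative if $xy=yx$ for all $x,y$. For invertible $b$, $b^0=\mathbf{1}$ and negative powers are powers of $b^{-1}$. A (finite) basis of a commutative scalable monoid $X$ over $K$ is a finite set $B=\{b_1,\ldots,b_n\}$ of invertible elements of $X$ such that every $x\in X$ has an expansion $x=\mu\prod_{i=1}^n b_i^{k_i}$ with $\mu\in K$ and $k_1,\ldots,k_n\in\mathbb{Z}$, and this expansion is unique (i.e. $\mu$ and $(k_1,\ldots,k_n)$ are uniquely determined by $x$). A quantity space over $K$ is a commutative scalable monoid over $K$ that has a finite basis. Elements $x,y$ are commensurable, $x\sim y$, if $\alpha x=\beta y$ for some $\alpha,\beta\in K$; this is an equivalence relation and a congruence, its classes are called realms (dimensions), $[x]$ is the realm of $x$, and $X/{\sim}$ is the set of realms with product $[x][y]=[xy]$ and unit $[\mathbf{1}]$. A basis of $X/{\sim}$ is a finite set $\{c_1,\ldots,c_n\}\subseteq X/{\sim}$ such that every element of $X/{\sim}$ can be written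 uniquely as $\prod_{i=1}^n c_i^{k_i}$ with $k_i\in\mathbb{Z}$. *)

From HB Require Import structures.
From mathcomp Require Import all_boot all_order all_algebra.
From Stdlib Require Import ClassicalEpsilon.
Set Implicit Arguments. Unset Strict Implicit. Unset Printing Implicit Defensive.
Import GRing.Theory.
Local Open Scope ring_scope.

Record scalable_monoid (K : fieldType) := ScalableMonoid {
  sm_car :> Type;
  sm_mul : sm_car -> sm_car -> sm_car;
  sm_one : sm_car;
  sm_scale : K -> sm_car -> sm_car;
  sm_mulA : forall x y z, sm_mul x (sm_mul y z) = sm_mul (sm_mul x y) z;
  sm_mul1x : forall x, sm_mul sm_one x = x;
  sm_mulx1 : forall x, sm_mul x sm_one = x;
  sm_scale1 : forall x, sm_scale 1 x = x;
  sm_scaleA : forall (a b : K) x, sm_scale a (sm_scale b x) = sm_scale (a * b) x;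
  sm_scale_mull : forall (a : K) x y, sm_scale a (sm_mul x y) = sm_mul (sm_scale a x) y;
  sm_scale_mulr : forall (a : K) x y, sm_scale a (sm_mul x y) = sm_mul x (sm_scale a y)
}.

Section MonoidNotions.
Variables (M : Type) (mul : M -> M -> M) (one : M).

Definition mprod (n : nat) (f : 'I_n -> M) : M :=
  foldr mul one [seq f i | i <- enum 'I_n].

(* integer power b^k of an invertible b, where b' is the inverse of b *)
Definition zpow (b b' : M) (k : int) : M :=
  match k with
  | Posz m => iter m (mul b) one
  | Negz m => iter m.+1 (mul b') one
  end.

Definition is_inverse (b b' : M) : Prop := mul b b' = one /\ mul b' b = one.

Definition is_monoid_basis (n : nat) (c : 'I_n -> M) : Prop :=
  exists c' : 'I_n -> M,
    (forall i, is_inverse (c i) (c' i)) /\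
    (forall m : M, exists k : 'I_n -> int,
        m = mprod (fun i => zpow (c i) (c' i) (k i))) /\
    (forall k l : 'I_n -> int,
        mprod (fun i => zpow (c i) (c' i) (k i)) =
        mprod (fun i => zpow (c i) (c' i) (l i)) -> forall i, k i = l i).

Definition is_abelian_group : Prop :=
  (forall x y z, mul x (mul y z) = mul (mul x y) z) /\
  (forall x, mul one x = x /\ mul x one = x) /\
  (forall x y, mul x y = mul y x) /\
  (forall x, exists y, is_inverse x y).

Definition is_free_abelian_finite_rank : Prop :=
  is_abelian_group /\ exists (n : nat) (c : 'I_n -> M), is_monoid_basis c.
End MonoidNotions.

Section Scalable.
Variables (K : fieldType) (X : scalable_monoid K).
Local Notation mulX := (@sm_mul K X).
Local Notation oneX := (@sm_one K X).
Local Notation scX := (@sm_scale K X).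

Definition sm_commutative : Prop := forall x y : X, mulX x y = mulX y x.

Definition is_qbasis (n : nat) (b : 'I_n -> X) : Prop :=
  exists b' : 'I_n -> X,
    (forall i, is_inverse mulX oneX (b i) (b' i)) /\
    (forall x : X, exists (mu : K) (k : 'I_n -> int),
        x = scX mu (mprod mulX oneX (fun i => zpow mulX oneX (b i) (b' i) (k i)))) /\
    (forall (mu nu : K) (k l : 'I_n -> int),
        scX mu (mprod mulX oneX (fun i => zpow mulX oneX (b i) (b' i) (k i))) =
        scX nu (mprod mulX oneX (fun i => zpow mulX oneX (b i) (b' i) (l i))) ->
        mu = nu /\ forall i, k i = l i).

Definition quantity_space : Prop :=
  sm_commutative /\ exists (n : nat) (b : 'I_n -> X), is_qbasis b.

Definition commensurable (x y : X) : Prop :=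
  exists a b : K, scX a x = scX b y.

(* realms: equivalence classes, X/~ *)
Definition realm_set := { R : X -> Prop | exists x : X, R = commensurable x }.

Definition realm_of (x : X) : realm_set :=
  exist _ (commensurable x) (ex_intro _ x erefl).

Definition realm_rep (R : realm_set) : X :=
  proj1_sig (constructive_indefinite_description _ (proj2_sig R)).

Definition realm_mul (R S : realm_set) : realm_set :=
  realm_of (mulX (realm_rep R) (realm_rep S)).
Definition realm_one : realm_set := realm_of oneX.
End Scalable.

(* A basis b_1..b_n of X makes the exponent vector x |-> (k_i) a monoid morphism
   from X onto Z^n whose fibres are exactly the realms, so X/~ is a free abelian
   group with basis [b_1], ..., [b_n].  Ranks are invariant because a group
   isomorphism Z^m ~ Z^n induces an injection (Z/2)^m -> (Z/2)^n, whence
   2^m <= 2^n. *)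
From mathcomp Require Import all_boot all_order all_algebra.
From mathcomp Require Import zify.
From Stdlib Require Import ClassicalEpsilon FunctionalExtensionality PropExtensionality ProofIrrelevance.
Set Implicit Arguments. Unset Strict Implicit. Unset Printing Implicit Defensive.
Import GRing.Theory.
Local Open Scope ring_scope.

Lemma int_subn (k : int) : exists m p : nat, k = m%:Z - p%:Z.
Proof. by case: k => [q|q]; [exists q, 0%N | exists 0%N, q.+1]; lia. Qed.

Lemma zvec_iso_le m n (f : ('I_m -> int) -> ('I_n -> int)) :
  (forall k l, f (fun i => k i + l i) = (fun j => f k j + f l j)) ->
  injective f -> (forall y, exists x, y = f x) -> (m <= n)%N.
Proof.
move=> fD finj fsurj.
pose lift (v : {ffun 'I_m -> bool}) i : int := (v i : nat)%:Z.
pose g (v : {ffun 'I_m -> bool}) := [ffun j => (f (lift v) j %% 2)%Z == 1].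
suff /leq_card : injective g by rewrite !card_ffun !card_bool !card_ord leq_exp2l.
move=> v w /ffunP gvw; set a := f (lift v); set a' := f (lift w).
(* Equal parities: a = a' + 2 z, and z = f y lifts back through f. *)
pose z j := ((a j - a' j) %/ 2)%Z.
have a_a'z : a = fun j => a' j + z j + z j.
  apply: functional_extensionality => j; move: (gvw j); rewrite !ffunE -/a -/a' /z.
  by case: eqP; case: eqP => //=; lia.
have [y zy] := fsurj z.
have /finj vwy : f (lift v) = f (fun i => lift w i + y i + y i) by rewrite !fD -zy.
apply/ffunP => i; move: (congr1 (fun h => h i) vwy); rewrite /lift.
by case: (v i); case: (w i) => //=; lia.
Qed.

Section Morphism.
Variables (M : Type) (mul : M -> M -> M) (one : M).
Variables (N : Type) (mul' : N -> N -> N) (one' : N).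
Variable h : M -> N.
Hypotheses (hM : forall x y, h (mul x y) = mul' (h x) (h y)) (h1 : h one = one').

Lemma hom_iter b m : h (iter m (mul b) one) = iter m (mul' (h b)) one'.
Proof. by elim: m => [|m IH] //=; rewrite hM IH. Qed.

Lemma hom_zpow b b' k : h (zpow mul one b b' k) = zpow mul' one' (h b) (h b') k.
Proof. by case: k => q; rewrite /zpow hom_iter. Qed.

Lemma hom_mprod n (f : 'I_n -> M) :
  h (mprod mul one f) = mprod mul' one' (fun i => h (f i)).
Proof. by rewrite /mprod; elim: (enum 'I_n) => [|x s IH] //=; rewrite hM IH. Qed.
End Morphism.

Section CommutativeMonoid.
Variables (M : Type) (mul : M -> M -> M) (one : M).
Hypotheses (mulA : forall x y z, mul x (mul y z) = mul (mul x y) z)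
  (mul1m : forall x, mul one x = x) (mulm1 : forall x, mul x one = x)
  (mulC : forall x y, mul x y = mul y x).

Lemma mulACA a b c d : mul (mul a b) (mul c d) = mul (mul a c) (mul b d).
Proof. by rewrite -!mulA; congr (mul a); rewrite !mulA (mulC b c). Qed.

Lemma mprodM n (f g : 'I_n -> M) :
  mprod mul one (fun i => mul (f i) (g i)) = mul (mprod mul one f) (mprod mul one g).
Proof.
rewrite /mprod; elim: (enum 'I_n) => [|x s IH] /=; first by rewrite mul1m.
by rewrite IH mulACA.
Qed.

Lemma iterD x m p :
  iter (m + p) (mul x) one = mul (iter m (mul x) one) (iter p (mul x) one).
Proof. by elim: m => [|m IH]; rewrite ?mul1m //= IH mulA. Qed.

Lemma iter_mul_inverse b b' m : is_inverse mul one b b' ->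
  mul (iter m (mul b) one) (iter m (mul b') one) = one.
Proof.
move=> [bb' _]; elim: m => [|m IH] /=; first by rewrite mul1m.
by rewrite mulACA bb' IH mul1m.
Qed.

Lemma zpow_subn b b' (m p : nat) : is_inverse mul one b b' ->
  zpow mul one b b' (m%:Z - p%:Z) = mul (iter m (mul b) one) (iter p (mul b') one).
Proof.
move=> bb'; case e: (m%:Z - p%:Z) => [q|q] /=.
- have -> : m = (q + p)%N by lia.
  by rewrite iterD -mulA iter_mul_inverse // mulm1.
- have -> : p = (m + q.+1)%N by lia.
  by rewrite iterD mulA iter_mul_inverse // mul1m.
Qed.

Lemma zpowD b b' (k l : int) : is_inverse mul one b b' ->
  zpow mul one b b' (k + l) = mul (zpow mul one b b' k) (zpow mul one b b' l).
Proof.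
move=> bb'; have [m1 [p1 ->]] := int_subn k; have [m2 [p2 ->]] := int_subn l.
have -> : m1%:Z - p1%:Z + (m2%:Z - p2%:Z) = (m1 + m2)%N%:Z - (p1 + p2)%N%:Z by lia.
by rewrite !zpow_subn // !iterD mulACA.
Qed.

Section Basis.
Variables (p : nat) (c c' : 'I_p -> M).
Hypothesis cc' : forall i, is_inverse mul one (c i) (c' i).

Definition monomial (k : 'I_p -> int) := mprod mul one (fun i => zpow mul one (c i) (c' i) (k i)).

Lemma monomialD k l : monomial (fun i => k i + l i) = mul (monomial k) (monomial l).
Proof.
rewrite /monomial -mprodM; congr (mprod _ _ _).
by apply: functional_extensionality => i; rewrite zpowD.
Qed.

Lemma monomial0 : monomial (fun _ => 0) = one.
Proof. by rewrite /monomial /mprod; elim: (enum 'I_p) => [|x s IH] //=; rewrite IH mul1m. Qed.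
End Basis.

Lemma monoid_basis_coord p (c : 'I_p -> M) : is_monoid_basis mul one c ->
  exists coord : M -> ('I_p -> int),
    (forall x y, coord (mul x y) = (fun i => coord x i + coord y i)) /\ bijective coord.
Proof.
move=> [c' [cc' [cspan cfree]]].
have monoK x : {k | x = monomial c c' k} by apply: constructive_indefinite_description.
pose coord x := sval (monoK x).
have coordK : cancel coord (monomial c c') by move=> x; exact/esym/(svalP (monoK x)).
have monoK' : cancel (monomial c c') coord.
  by move=> k; apply: functional_extensionality; apply: cfree; exact: coordK.
exists coord; split; last by exists (monomial c c').
by move=> x y; rewrite -[x]coordK -[y]coordK -monomialD // !monoK'.
Qed.

Lemma monoid_basis_le p q (c : 'I_p -> M) (d : 'I_q -> M) :
  is_monoid_basis mul one c -> is_monoid_basis mul one d -> (p <= q)%N.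
Proof.
move=> /monoid_basis_coord [cc [ccM [gc ccK gcK]]].
move=> /monoid_basis_coord [cd [cdM [gd cdK gdK]]].
have gcD k l : gc (fun i => k i + l i) = mul (gc k) (gc l).
  by apply: (can_inj ccK); rewrite ccM !gcK.
apply: (@zvec_iso_le _ _ (cd \o gc)).
- by move=> k l /=; rewrite gcD cdM.
- by move=> k l /= /(can_inj cdK)/(can_inj gcK).
- by move=> y; exists (cc (gd y)); rewrite /= ccK gdK.
Qed.

Lemma monoid_basis_size p q (c : 'I_p -> M) (d : 'I_q -> M) :
  is_monoid_basis mul one c -> is_monoid_basis mul one d -> p = q.
Proof.
move=> hc hd; apply/eqP.
by rewrite eqn_leq (monoid_basis_le hc hd) (monoid_basis_le hd hc).
Qed.
End CommutativeMonoid.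

Section Realms.
Variables (K : fieldType) (X : scalable_monoid K).
Local Notation mulX := (@sm_mul K X).
Local Notation oneX := (@sm_one K X).
Local Notation scX := (@sm_scale K X).
Local Notation realm_mulX := (@realm_mul K X).

Lemma realm_set_eq (R S : realm_set X) : sval R = sval S -> R = S.
Proof.
case: R S => [P HP] [Q HQ] /= PQ; subst Q.
by rewrite (proof_irrelevance _ HP HQ).
Qed.

Lemma realm_repK (R : realm_set X) : realm_of (realm_rep R) = R.
Proof.
apply: realm_set_eq; rewrite /realm_rep /=.
by case: constructive_indefinite_description.
Qed.

Lemma realm_ofP (R : realm_set X) : exists x, R = realm_of x.
Proof. by exists (realm_rep R); rewrite realm_repK. Qed.

Hypothesis mulXC : sm_commutative X.
Variables (n : nat) (b b' : 'I_n -> X).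
Local Notation qmon := (monomial mulX oneX b b').
Hypotheses (bb' : forall i, is_inverse mulX oneX (b i) (b' i))
  (bspan : forall x : X, exists (mu : K) (k : 'I_n -> int), x = scX mu (qmon k))
  (bfree : forall (mu nu : K) (k l : 'I_n -> int),
    scX mu (qmon k) = scX nu (qmon l) -> mu = nu /\ forall i, k i = l i).

Lemma qmonD k l : qmon (fun i => k i + l i) = mulX (qmon k) (qmon l).
Proof. exact: (monomialD (@sm_mulA K X) (@sm_mul1x K X) (@sm_mulx1 K X) mulXC bb'). Qed.

Lemma qmon_span x : exists k mu, x = scX mu (qmon k).
Proof. by have [mu [k ->]] := bspan x; exists k, mu. Qed.

Definition exps (x : X) : 'I_n -> int :=
  sval (constructive_indefinite_description _ (qmon_span x)).

Lemma expsP x : exists mu, x = scX mu (qmon (exps x)).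
Proof. by rewrite /exps; case: constructive_indefinite_description. Qed.

Lemma exps_scale_qmon mu k : exps (scX mu (qmon k)) = k.
Proof.
have [nu /esym/bfree [_ ek]] := expsP (scX mu (qmon k)).
by apply: functional_extensionality => i; rewrite ek.
Qed.

Lemma exps_qmon k : exps (qmon k) = k.
Proof. by rewrite -[qmon k]sm_scale1 exps_scale_qmon. Qed.

Lemma exps_scale a x : exps (scX a x) = exps x.
Proof. by have [mu {1}->] := expsP x; rewrite sm_scaleA exps_scale_qmon. Qed.

Lemma exps_mul x y : exps (mulX x y) = (fun i => exps x i + exps y i).
Proof.
have [mu {1}->] := expsP x; have [nu {1}->] := expsP y.
by rewrite -sm_scale_mull -sm_scale_mulr sm_scaleA -qmonD exps_scale_qmon.
Qed.

Lemma commensurable_exps x y : commensurable x y <-> exps x = exps y.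
Proof.
split=> [[a [c acxy]]|exy]; first by rewrite -(exps_scale a) acxy exps_scale.
have [mu ex] := expsP x; have [nu ey] := expsP y.
by exists nu, mu; rewrite {1}ex {1}ey !sm_scaleA exy mulrC.
Qed.

Lemma realm_of_eq x y : realm_of x = realm_of y <-> exps x = exps y.
Proof.
split=> [/(congr1 sval) /= cxy|exy].
  by apply/commensurable_exps; rewrite cxy; apply/commensurable_exps.
apply: realm_set_eq; apply: functional_extensionality => z.
by apply: propositional_extensionality; rewrite /= !commensurable_exps exy.
Qed.

Lemma realm_ofM x y : realm_of (mulX x y) = realm_mulX (realm_of x) (realm_of y).
Proof.
apply/realm_of_eq; rewrite /realm_mul !exps_mul.
have /realm_of_eq -> := realm_repK (realm_of x).
by have /realm_of_eq -> := realm_repK (realm_of y).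
Qed.

Lemma realm_abelian_group : is_abelian_group realm_mulX (realm_one X).
Proof.
split; [|split; [|split]].
- move=> R S T; have [x ->] := realm_ofP R; have [y ->] := realm_ofP S.
  by have [z ->] := realm_ofP T; rewrite -!realm_ofM sm_mulA.
- by move=> R; have [x ->] := realm_ofP R; rewrite -!realm_ofM sm_mul1x sm_mulx1.
- move=> R S; have [x ->] := realm_ofP R; have [y ->] := realm_ofP S.
  by rewrite -!realm_ofM mulXC.
- move=> R; have [x ->] := realm_ofP R.
  exists (realm_of (qmon (fun i => - exps x i))).
  have exps1 : exps oneX = fun _ => 0.
    by rewrite -(monomial0 (@sm_mul1x K X) b b') exps_qmon.
  split; rewrite -realm_ofM; apply/realm_of_eq; rewrite exps_mul exps_qmon exps1;
    by apply: functional_extensionality => i; rewrite ?subrr ?addNr.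
Qed.

Lemma realm_monomial k :
  monomial realm_mulX (realm_one X) (fun i => realm_of (b i)) (fun i => realm_of (b' i)) k
  = realm_of (qmon k).
Proof.
rewrite /monomial (hom_mprod realm_ofM (erefl (realm_one X))).
congr (mprod _ _ _); apply: functional_extensionality => i.
by rewrite (hom_zpow realm_ofM (erefl (realm_one X))).
Qed.

Lemma realm_basis : is_monoid_basis realm_mulX (realm_one X) (fun i => realm_of (b i)).
Proof.
exists (fun i => realm_of (b' i)); split; [|split].
- by move=> i; have [bb'1 b'b1] := bb' i; rewrite /is_inverse -!realm_ofM bb'1 b'b1.
- move=> R; have [x ->] := realm_ofP R.
  exists (exps x); rewrite -/(monomial _ _ _ _ (exps x)) realm_monomial.
  by apply/realm_of_eq; rewrite exps_qmon.
- move=> k l; rewrite -/(monomial _ _ _ _ k) -/(monomial _ _ _ _ l) !realm_monomial.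
  by move=> /realm_of_eq; rewrite !exps_qmon => ->.
Qed.
End Realms.

Lemma qbasis_realm_basis (K : fieldType) (X : scalable_monoid K) n (b : 'I_n -> X) :
  sm_commutative X -> is_qbasis b ->
  is_monoid_basis (@realm_mul K X) (realm_one X) (fun i => realm_of (b i)).
Proof. by move=> mulXC [b' [bb' [bspan bfree]]]; exact: realm_basis bfree. Qed.

Lemma quantity_space_realm_group (K : fieldType) (X : scalable_monoid K) :
  quantity_space X -> is_abelian_group (@realm_mul K X) (realm_one X).
Proof. by move=> [mulXC [n [b [b' [bb' [bspan bfree]]]]]]; exact: realm_abelian_group bfree. Qed.

Theorem mainTheorem15 (K : fieldType) (X : scalable_monoid K) :
  quantity_space X ->
  is_free_abelian_finite_rank (@realm_mul K X) (realm_one X) /\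
  (forall (n m : nat) (c : 'I_n -> realm_set X) (d : 'I_m -> realm_set X),
      is_monoid_basis (@realm_mul K X) (realm_one X) c ->
      is_monoid_basis (@realm_mul K X) (realm_one X) d -> n = m) /\
  (forall (n m : nat) (b : 'I_n -> X) (c : 'I_m -> realm_set X),
      is_qbasis b -> is_monoid_basis (@realm_mul K X) (realm_one X) c -> n = m) /\
  (forall (n m : nat) (b : 'I_n -> X) (b' : 'I_m -> X),
      is_qbasis b -> is_qbasis b' -> n = m).
Proof.
move=> qsX; have [mulXC [n [b qb]]] := qsX.
have realmG := quantity_space_realm_group qsX.
have [mulA [mul1 [mulC _]]] := realmG.
have basis_size := monoid_basis_size mulA (fun x => proj1 (mul1 x)) (fun x => proj2 (mul1 x)) mulC.
split; [|split; [|split]].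
- by split=> //; exists n, (fun i => realm_of (b i)); exact: qbasis_realm_basis.
- exact: basis_size.
- by move=> n' m b1 c qb1; apply: basis_size; exact: qbasis_realm_basis qb1.
- move=> n' m b1 b2 qb1 qb2.
  exact: basis_size (qbasis_realm_basis _ qb1) (qbasis_realm_basis _ qb2).
Qed.
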